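(* Let $X$ be a uniform space and let $(\mu_i)_{i\in I}$ be a net of Borel probability measures on $X$ which concentrates in $X$. Let $H$ be a uniformly equicontinuous, norm-bounded set of bounded uniformly continuous real-valued functions on $X$, and let $\epsilon>0$. Then $$\sup_{f\in H}\mu_i\bigl(\{x\in X : |f(x)-\mathbb E_{\mu_i}(f)|>\epsilon\}\bigr)\to 0 .$$
   Context: For an entourage $U$ of $X$ and $A\subseteq X$, $U[A]=\{y\in X:\exists x\in A,\ (x,y)\in U\}$. A net $(\mu_i)_{i\in I}$ of Borel probability measures on $X$ concentrates in $X$ if, whenever $(A_i)_{i\in I}$ are Borel subsets of $X$ with $\liminf_{i}\mu_i(A_i)>0$, one has $\lim_i\mu_i(U[A_i])=1$ for every open entourage $U$ of $X$. $\mathbb E_{\mu}(f)=\int f\,d\mu$. *)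

From HB Require Import structures.
From mathcomp Require Import all_boot all_order all_algebra.
From mathcomp Require Import all_classical all_reals all_analysis.
Set Implicit Arguments. Unset Strict Implicit. Unset Printing Implicit Defensive.
Import Order.TTheory GRing.Theory Num.Theory.
Import numFieldNormedType.Exports.
Local Open Scope classical_set_scope.
Local Open Scope ring_scope.

Definition directed_set (I : Type) (le : I -> I -> Prop) : Prop :=
  [/\ (exists i : I, True),
      (forall i, le i i),
      (forall i j k, le i j -> le j k -> le i k) &
      (forall i j, exists k, le i k /\ le j k)].

Definition net_cvg (I : Type) (le : I -> I -> Prop) (T : topologicalType)
  (u : I -> T) (l : T) : Prop :=
  forall V, nbhs l V -> exists i0, forall i, le i0 i -> V (u i).

Definition net_liminf (I : Type) (le : I -> I -> Prop) (R : realType)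
  (u : I -> \bar R) : \bar R :=
  ereal_sup [set ereal_inf [set u j | j in [set j | le i0 j]] | i0 in [set: I]].

Notation borel_type X := (g_sigma_algebraType (@open X)).

Definition ent_img (X : Type) (U : set (X * X)) (A : set X) : set X :=
  [set y | exists2 x, A x & U (x, y)].

Definition concentrates (R : realType) (X : puniformType) (I : Type)
  (le : I -> I -> Prop) (mu : I -> probability (borel_type X) R) : Prop :=
  forall A : I -> set X,
    (forall i, (@open X).-sigma.-measurable (A i)) ->
    (0 < net_liminf le (fun i => mu i (A i)))%E ->
    forall U : set (X * X), entourage U -> open U ->
      net_cvg le (fun i => mu i (ent_img U (A i))) 1%E.

From HB Require Import structures.
From mathcomp Require Import all_boot all_order all_algebra.
From mathcomp Require Import all_classical all_reals all_analysis.
From mathcomp Require Import lra measurable_realfun.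
Set Implicit Arguments. Unset Strict Implicit. Unset Printing Implicit Defensive.
Import Order.TTheory GRing.Theory Num.Theory.
Import numFieldNormedType.Exports.
Local Open Scope classical_set_scope.
Local Open Scope ring_scope.

(* Picking at each index i an f_i in H whose eps-deviation set has measure
   above delta whenever some element of H does, and noting that deviations
   below the mean are deviations above the mean of -f_i, it is enough to show
   that mu_i {f_i > E f_i + eps} is eventually at most delta.
   If this exceeded delta along a cofinal set of indices, let A_i be that set
   there and X elsewhere: then liminf mu_i (A_i) > 0, so mu_i (U[A_i]) -> 1 for
   an open entourage U on which every f in H varies by less than eps/2.  But
   U[A_i] lies in {f_i > E f_i + eps/2}, and integrating
   (E f + c + M) 1_{f > E f + c} <= f + M shows that a function bounded by M
   satisfies mu {f > E f + c} <= 2M / (2M + c) < 1. *)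

Lemma entourage_interior (X : uniformType) (E : set (X * X)) :
  entourage E -> entourage E°.
Proof.
move=> entE; set W := split_ent (split_ent E).
have entW : entourage W by do 2 apply: entourage_split_ent.
apply: (filterS _ entW) => -[x y] Wxy; rewrite /interior.
change (filter_prod (nbhs x) (nbhs y) E).
exists (xsection W^-1%relation x, xsection W y).
  by split; apply: nbhs_entourage; [exact: (entourage_inv entW) | exact: entW].
move=> [a b] [/= /xsectionP Wxa /xsectionP Wby].
apply: (@entourage_split _ y) => //; first exact: (@entourage_split _ x).
by apply: (@entourage_split _ b) => //; exact: entourage_refl.
Qed.

Lemma open_ent_img (X : uniformType) (U : set (X * X)) (A : set X) :
  open U -> open (ent_img U A).
Proof.
rewrite !openE => oU y [x Ax Uxy].
have : filter_prod (nbhs x) (nbhs y) U := oU (x, y) Uxy.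
move=> [[P Q] [Px Qy] PQ]; apply: filterS Qy => z Qz.
by exists x => //; apply: PQ; split => //=; exact: nbhs_singleton.
Qed.

Lemma unif_continuous_continuous (X Y : uniformType) (f : X -> Y) :
  unif_continuous f -> continuous f.
Proof.
move=> fu x; apply/cvg_entourageP => E entE.
by apply: filterS (nbhs_entourage x (fu _ entE)) => y /xsectionP.
Qed.

Lemma open_borel_measurable (X : ptopologicalType) (A : set X) :
  open A -> measurable (A : set (borel_type X)).
Proof. exact: sub_sigma_algebra. Qed.

Lemma continuous_borel_measurable (R : realType) (X : ptopologicalType) (f : X -> R) :
  continuous f -> measurable_fun setT (f : borel_type X -> R).
Proof.
move=> /continuousP cf; apply: (measurability _ (RGenOpens.measurableE R)).
move=> _ [_ [a [b ->]] <-]; rewrite setTI; apply: open_borel_measurable.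
exact/cf/interval_open.
Qed.

Definition mean d (T : measurableType d) (R : realType) (P : probability T R)
  (g : T -> R) : R := fine (\int[P]_x (g x)%:E)%E.

Lemma measurable_gt_set d (T : measurableType d) (R : realType) (g : T -> R) (a : R) :
  measurable_fun setT g -> measurable [set x | a < g x].
Proof.
by move=> mg; have := mg measurableT _ (measurable_itv `]a, +oo[); rewrite setTI preimage_itvoy.
Qed.

Section bounded_function.
Context d (T : measurableType d) (R : realType) (P : probability T R).
Variables (g : T -> R) (M : R).
Hypotheses (mg : measurable_fun setT g) (gM : forall x, `|g x| <= M).

Let M_ge0 : 0 <= M. Proof. exact: le_trans (gM point). Qed.

Let integrable_g : P.-integrable setT (EFin \o g).
Proof.
apply: measurable_bounded_integrable => //; first by rewrite ltey_eq fin_num_measure.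
by exists M; split; [rewrite num_real | move=> K MK x _; exact: le_trans (gM x) (ltW MK)].
Qed.

Lemma integral_mean : (\int[P]_x (g x)%:E = (mean P g)%:E)%E.
Proof. by rewrite fineK //; exact: integrable_fin_num integrable_g. Qed.

Lemma meanN : mean P (fun x => - g x) = - mean P g.
Proof.
rewrite /mean -fineN; congr fine.
under eq_integral do rewrite EFinN.
by apply: integralN; exact: integrable_add_def integrable_g.
Qed.

Lemma mean_norm_le : `|mean P g| <= M.
Proof.
rewrite -lee_fin -abse_EFin -integral_mean.
have mEg : measurable_fun setT (EFin \o g) by exact/measurable_EFinP.
apply: le_trans (le_abse_integral P measurableT mEg) _.
rewrite -[M%:E]mule1 -(probability_setT P) integral_le_bound ?lee_fin ?M_ge0 //.
by apply: aeW => x _; rewrite lee_fin.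
Qed.

Lemma probability_gt_mean_le (c : R) : 0 < c ->
  (P [set x | (mean P g + c < g x)%R] <= (2 * M / (2 * M + c))%:E)%E.
Proof.
move=> c0; set e := mean P g; set S := [set x | e + c < g x].
have mS : measurable S := measurable_gt_set _ mg.
have eM := mean_norm_le; rewrite -/e ler_norml in eM.
have key : (e + c + M) * fine (P S) <= e + M.
  have iS := integrableZl measurableT (e + c + M) (integrable_indic P mS).
  have iM := finite_measure_integrable_cst P M measurableT.
  have igM := integrableD measurableT integrable_g iM.
  have := le_integral measurableT iS igM.
  rewrite integralZl // ?integrable_indic // integral_indic // setIT integralD //.
  rewrite [X in (_ <= X + _)%E]integral_mean.
  rewrite (_ : \int[P]_x (EFin \o cst M) x = M%:E)%E; last first.
    by rewrite (integral_cst P measurableT M%:E) [X in (_ * X)%E]probability_setT mule1.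
  rewrite [X in (_ * X <= _)%E](_ : _ = (fine (P S))%:E); last first.
    by rewrite fineK ?fin_num_measure.
  rewrite -EFinM -EFinD lee_fin; apply => x _; rewrite /= indicE -EFinM -EFinD lee_fin.
  case: (boolP (x \in S)) => [/set_mem|_]; first by rewrite mulr1 /S /=; lra.
  by rewrite mulr0; have := gM x; rewrite ler_norml; lra.
have p0 : 0 <= fine (P S) by rewrite fine_ge0.
have p1 : fine (P S) <= 1 by rewrite -lee_fin fineK ?probability_le1 ?fin_num_measure.
rewrite [X in (X <= _)%E](_ : _ = (fine (P S))%:E); last by rewrite fineK ?fin_num_measure.
rewrite lee_fin ler_pdivlMr; last by rewrite ltr_wpDl // mulr_ge0 ?M_ge0.
nra.
Qed.

Lemma probability_deviation_le (eps : R) :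
  (P [set x | `|(g x)%:E - \int[P]_y (g y)%:E| > eps%:E] <=
   P [set x | (mean P g + eps < g x)%R] +
   P [set x | (mean P (fun y => - g y) + eps < - g x)%R])%E.
Proof.
rewrite meanN; set A := [set x | _ < g x]; set B := [set x | _ < - g x].
have -> : [set x | `|(g x)%:E - \int[P]_y (g y)%:E| > eps%:E]%E =
          [set x | eps < `|g x - mean P g|].
  by apply: eq_set => x; rewrite integral_mean -EFinB abse_EFin lte_fin.
have mD : measurable [set x | eps < `|g x - mean P g|].
  apply: measurable_gt_set; apply: measurableT_comp => //.
  exact: measurable_funB.
have mA : measurable A := measurable_gt_set _ mg.
have mB : measurable B := measurable_gt_set _ (measurable_funN mg).
have DAB : [set x | eps < `|g x - mean P g|] `<=` A `|` B.
  move=> x /=; rewrite /A /B /=.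
  by case: (lerP 0 (g x - mean P g)) => [/ger0_norm|/ltr0_norm] ->; lra.
exact: le_trans (le_measure P (mem_set mD) (mem_set (measurableU _ _ mA mB)) DAB)
  (measureU2 P mA mB).
Qed.
End bounded_function.

Lemma net_liminf_ge (I : Type) (le : I -> I -> Prop) (R : realType)
  (u : I -> \bar R) (b : \bar R) :
  (exists i : I, True) -> (forall i, (b <= u i)%E) -> (b <= net_liminf le u)%E.
Proof.
move=> [i0 _] bu; apply: le_trans (ereal_sup_ubound _); last by exists i0.
by apply/ereal_infP => _ [j _ <-].
Qed.

Lemma net_cvg_ereal_sup0 (I : Type) (le : I -> I -> Prop) (R : realType)
  (S : I -> set (\bar R)) :
  (forall e : R, 0 < e -> exists i0, forall i, le i0 i -> forall y, S i y -> (y <= e%:E)%E) ->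
  net_cvg le (fun i => ereal_sup ([set 0%E] `|` S i)) 0%E.
Proof.
move=> small V nV; have : \forall r \near (0 : R), V r%:E := nV.
move=> /nbhs_ballP[e /= e0 eV]; have e2 : 0 < e / 2 by lra.
have [i0 Si0] := small _ e2; exists i0 => i i0i.
set F := ereal_sup _.
have F_ge0 : (0 <= F)%E by apply: ereal_sup_ubound; left.
have F_le : (F <= (e / 2)%:E)%E.
  by apply/ereal_supP => y [/= ->|/(Si0 _ i0i) //]; rewrite lee_fin ltW.
have F_fin : F \is a fin_num by rewrite ge0_fin_numE // (le_lt_trans F_le) // ltry.
rewrite -(fineK F_fin); apply: eV; rewrite /ball /= sub0r normrN.
move: F_ge0 F_le; rewrite -(fineK F_fin) !lee_fin => F_ge0 F_le.
rewrite ger0_norm //; lra.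
Qed.

Section concentration.
Variables (R : realType) (X : puniformType) (I : Type) (le : I -> I -> Prop).
Variable mu : I -> probability (borel_type X) R.
Hypotheses (le_directed : directed_set le) (mu_concentrates : concentrates le mu).

Lemma concentrates_upper_deviation (g : I -> X -> R) (M eps : R) (U : set (X * X)) :
  entourage U -> open U -> 0 < eps ->
  (forall i, measurable_fun setT (g i : borel_type X -> R)) ->
  (forall i x, `|g i x| <= M) ->
  (forall i x y, U (x, y) -> `|g i x - g i y| < eps / 2) ->
  forall delta : R, 0 < delta -> exists i0, forall i, le i0 i ->
    (mu i [set x | (mean (mu i) (g i) + eps < g i x)%R] <= delta%:E)%E.
Proof.
move=> entU oU eps0 mg gM gU delta delta0; apply: contrapT => /forallNP never.
have [[i00 _] _ _ _] := le_directed.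
pose B i : set (borel_type X) := [set x | mean (mu i) (g i) + eps < g i x].
pose A i : set (borel_type X) := if pselect (delta%:E < mu i (B i))%E then B i else setT.
have mB i : measurable (B i) := measurable_gt_set _ (mg i).
have mA i : measurable (A i).
  by rewrite /A; case: pselect => /= _; [exact: mB | exact: measurableT].
have A_ge i : ((Num.min delta 1)%:E <= mu i (A i))%E.
  rewrite /A; case: pselect => /= [/ltW|_]; first by apply: le_trans; rewrite lee_fin ge_min lexx.
  by rewrite probability_setT lee_fin ge_min lexx orbT.
have liminf_gt0 : (0 < net_liminf le (fun i => mu i (A i)))%E.
  apply: lt_le_trans (net_liminf_ge _ _ A_ge); last by exists i00.
  by rewrite lte_fin lt_min delta0 ltr01.
have M0 : 0 <= M := le_trans (normr_ge0 _) (gM i00 point).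
have eps2_gt0 : 0 < eps / 2 by lra.
pose q := 2 * M / (2 * M + eps / 2).
have q1 : q < 1 by rewrite ltr_pdivrMr; lra.
have [i0 near1] := mu_concentrates mA liminf_gt0 entU oU (@nbhs_open_ereal_gt R 1 (fun=> q) q1).
have /existsPNP[i i0i /negP] := never i0; rewrite -ltNge => badi.
have := near1 i i0i; rewrite /A; case: pselect => //= _ qUB.
have UB_sub : ent_img U (B i) `<=` [set x | mean (mu i) (g i) + eps / 2 < g i x].
  by move=> y [x Bx Uxy]; have := gU i x y Uxy; rewrite ltr_norml /B /= in Bx *; lra.
have mUB : measurable (ent_img U (B i) : set (borel_type X)).
  by apply: open_borel_measurable; exact: open_ent_img.
have := le_measure (mu i) (mem_set mUB) (mem_set (measurable_gt_set _ (mg i))) UB_sub.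
move=> /le_trans /(_ (probability_gt_mean_le (mu i) (mg i) (gM i) eps2_gt0)).
by move=> /(lt_le_trans qUB); rewrite ltxx.
Qed.

Lemma concentrates_deviation_uniform (H : set (X -> R)) (M eps : R) (U : set (X * X)) :
  entourage U -> open U -> 0 < eps ->
  (forall f, H f -> measurable_fun setT (f : borel_type X -> R)) ->
  (forall f, H f -> forall x, `|f x| <= M) ->
  (forall f, H f -> forall x y, U (x, y) -> `|f x - f y| < eps / 2) ->
  forall delta : R, 0 < delta -> exists i0, forall i, le i0 i -> forall f, H f ->
    (mu i [set x | `|(f x)%:E - \int[mu i]_y (f y)%:E| > eps%:E] <= delta%:E)%E.
Proof.
move=> entU oU eps0 mH HM HU delta delta0.
have [[i00 _] _ le_transitive le_upper_bound] := le_directed.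
have [[f0 Hf0]|Hempty] := pselect (exists f, H f); last first.
  by exists i00 => i _ f Hf; case: Hempty; exists f.
pose D i f := [set x | `|(f x)%:E - \int[mu i]_y (f y)%:E| > eps%:E]%E.
have worst i : exists g, H g /\
    forall f, H f -> (delta%:E < mu i (D i f))%E -> (delta%:E < mu i (D i g))%E.
  case: (pselect (exists2 f, H f & (delta%:E < mu i (D i f))%E)).
    by move=> [f Hf bad]; exists f.
  by move=> nobad; exists f0; split => // f Hf bad; case: nobad; exists f.
have [g gP] := choice worst.
have gH i : H (g i) by have [] := gP i.
have delta2 : 0 < delta / 2 by lra.
have [i1 up] := concentrates_upper_deviation entU oU eps0 (fun i => mH _ (gH i))
  (fun i => HM _ (gH i)) (fun i => HU _ (gH i)) delta2.
have gN_bound i x : `|- g i x| <= M by rewrite normrN; exact: HM.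
have gN_mod i x y : U (x, y) -> `|- g i x - - g i y| < eps / 2.
  by move=> Uxy; rewrite -opprD normrN; exact: HU.
have [i2 down] := concentrates_upper_deviation (g := fun i x => - g i x) entU oU eps0
  (fun i => measurable_funN (mH _ (gH i))) gN_bound gN_mod delta2.
have [i0 [i10 i20]] := le_upper_bound i1 i2.
exists i0 => i i0i f Hf.
have g_small : (mu i (D i (g i)) <= delta%:E)%E.
  apply: le_trans (probability_deviation_le (mu i) (mH _ (gH i)) (HM _ (gH i)) eps) _.
  rewrite (splitr delta) EFinD.
  apply: leeD; first by apply: up; exact: le_transitive i10 i0i.
  by apply: down; exact: le_transitive i20 i0i.
by rewrite leNgt; apply/negP => /(proj2 (gP i) f Hf); rewrite ltNge g_small.
Qed.
End concentration.

Theorem corollary3p7 (R : realType) (X : puniformType) (I : Type)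
  (le : I -> I -> Prop) (mu : I -> probability (borel_type X) R)
  (H : set (X -> R)) (eps : R) :
  directed_set le ->
  concentrates le mu ->
  (* each f in H is bounded and uniformly continuous *)
  (forall f, H f -> (exists M : R, forall x, `|f x| <= M) /\ @unif_continuous X R f) ->
  (* H is uniformly equicontinuous *)
  (forall e : R, 0 < e -> exists2 U : set (X * X), entourage U &
     forall f, H f -> forall x y, U (x, y) -> `|f x - f y| < e) ->
  (* H is norm-bounded (in the sup norm) *)
  (exists M : R, forall f, H f -> forall x, `|f x| <= M) ->
  0 < eps ->
  net_cvg le
    (fun i => ereal_sup ([set 0%E] `|` [set mu i [set x | (`|(f x)%:E - \int[mu i]_y (f y)%:E| > eps%:E)%E]
                        | f in H])) 0%E.
Proof.
move=> le_directed mu_concentrates H_uc H_equi [M HM] eps0.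
have [W entW HW] := H_equi (eps / 2) ltac:(lra).
have mH f : H f -> measurable_fun setT (f : borel_type X -> R).
  by move=> /H_uc[_ /unif_continuous_continuous]; exact: continuous_borel_measurable.
have HU f : H f -> forall x y, W° (x, y) -> `|f x - f y| < eps / 2.
  by move=> Hf x y /interior_subset; exact: HW.
apply: net_cvg_ereal_sup0 => delta delta0.
have [i0 small] := concentrates_deviation_uniform le_directed mu_concentrates
  (entourage_interior entW) (@open_interior _ W) eps0 mH HM HU delta0.
by exists i0 => i i0i _ [f Hf <-]; exact: small.
Qed.
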